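(* Let $d_h,d_b\ge1$, $d=2d_h+d_b+2$, $n\ge1$, and $s_1,\dots,s_n\in\mathbb{Q}^{d_b}$. Let $K^e=(k_1,\dots,k_n)$ and $V^e=(v_1,\dots,v_n)$ with $k_i=[0_{d_h},0_{d_b},0_{d_h},-1,i]$ and $v_i=[0_{d_h},s_i,0_{d_h},0,0]$. Let $t\in\mathbb{N}$ and let $q_t\in\mathbb{Q}^d$ be any vector whose last two coordinates are $t+1$ and $1$. Then $$\mathrm{Att}(q_t,K^e,V^e)=[0_{d_h},s_{\min\{t+1,n\}},0_{d_h},0,0].$$
   Context: Vectors are written as concatenations of blocks $[\cdot,\dots]$; $0_k$ is the zero vector of length $k$. $\mathrm{Att}(q,K,V)=\sum_{i=1}^n\alpha_iv_i$ where $(\alpha_1,\dots,\alpha_n)=\mathrm{hardmax}(f^{att}(q,k_1),\dots,f^{att}(q,k_n))$, with $\mathrm{hardmax}(x)_i=1/r$ if $x_i$ is one of the $r$ coordinates attaining the maximum and $0$ otherwise, and scoring function $f^{att}(q,k)=-|\langle q,k\rangle|$. *)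

From HB Require Import structures.
From mathcomp Require Import all_boot all_order all_algebra.
Set Implicit Arguments. Unset Strict Implicit. Unset Printing Implicit Defensive.
Import Order.TTheory GRing.Theory Num.Theory.
Local Open Scope ring_scope.

Definition dotv (m : nat) (x y : 'rV[rat]_m) : rat := (x *m y^T) 0 0.

Definition fatt (m : nat) (q k : 'rV[rat]_m) : rat := - `|dotv q k|.

Definition argmax_set (n : nat) (x : 'I_n -> rat) : {set 'I_n} :=
  [set i | [forall j, x j <= x i]].

Definition hardmax (n : nat) (x : 'I_n -> rat) (i : 'I_n) : rat :=
  if i \in argmax_set x then (#|argmax_set x|%:R)^-1 else 0.

Definition Att (m p n : nat) (q : 'rV[rat]_m) (K : 'I_n -> 'rV[rat]_m)
  (V : 'I_n -> 'rV[rat]_p) : 'rV[rat]_p :=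
  \sum_(i < n) hardmax (fun j => fatt q (K j)) i *: V i.

(* block concatenation [a, b, c, x, y] with a,c in Q^dh, b in Q^db, x,y in Q *)
Definition blk5 (dh db : nat) (a : 'rV[rat]_dh) (b : 'rV[rat]_db) (c : 'rV[rat]_dh)
  (x y : rat) : 'rV[rat]_(dh + db + dh + 2) :=
  row_mx (row_mx (row_mx a b) c) (row_mx (x%:M : 'rV[rat]_1) (y%:M : 'rV[rat]_1)).

Lemma idx_min_lt (n : nat) (hn : (0 < n)%N) (t : nat) : ((minn t.+1 n).-1 < n)%N.
Proof.
case: n hn => // n _; rewrite /minn; case: ifP => //= h.
by rewrite -ltnS (leq_trans h).
Qed.

(* the 0-based ordinal of the 1-based index min{t+1, n} *)
Definition idx_min (n : nat) (hn : (0 < n)%N) (t : nat) : 'I_n :=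
  Ordinal (idx_min_lt hn t).

From HB Require Import structures.
From mathcomp Require Import all_boot all_order all_algebra lra zify.
Import Order.TTheory GRing.Theory Num.Theory.
Local Open Scope ring_scope.

(* The query and key k_i have inner product i - t (0-based i), so the score
   -|i - t| is uniquely maximised at the index closest to t, which is
   min(t, n-1); hardmax then selects exactly that value vector. *)

Lemma dotv_row_mx (a b : nat) (x y : 'rV[rat]_a) (u v : 'rV[rat]_b) :
  dotv (row_mx x u) (row_mx y v) = dotv x y + dotv u v.
Proof. by rewrite /dotv tr_row_mx mul_row_col mxE. Qed.

Lemma dotv_scalar (x y : rat) : dotv (x%:M : 'rV_1) y%:M = x * y.
Proof. by rewrite /dotv tr_scalar_mx mul_scalar_mx scale_scalar_mx mxE. Qed.

Lemma dotvr0 (m : nat) (x : 'rV[rat]_m) : dotv x 0 = 0.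
Proof. by rewrite /dotv trmx0 mulmx0 mxE. Qed.

Lemma argmax_set_unique (n : nat) (x : 'I_n -> rat) (j0 : 'I_n) :
  (forall j, j != j0 -> x j < x j0) -> argmax_set x = [set j0].
Proof.
move=> x_lt; apply/setP => j; rewrite !inE; apply/forallP/eqP => [le_x | ->].
  by apply/eqP; apply: contraT => /x_lt; rewrite ltNge le_x.
by move=> k; case: (eqVneq k j0) => [-> // | /x_lt/ltW].
Qed.

Lemma Att_unique_max (m p n : nat) (q : 'rV[rat]_m) (K : 'I_n -> 'rV[rat]_m)
    (V : 'I_n -> 'rV[rat]_p) (j0 : 'I_n) :
  (forall j, j != j0 -> fatt q (K j) < fatt q (K j0)) -> Att q K V = V j0.
Proof.
move=> /argmax_set_unique argmaxE.
rewrite /Att (bigD1 j0) //= big1 => [|j j_neq].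
  by rewrite /hardmax argmaxE set11 cards1 invr1 scale1r addr0.
by rewrite /hardmax argmaxE inE (negbTE j_neq) scale0r.
Qed.

Lemma idx_min_nearest (R : realDomainType) (n : nat) (hn : (0 < n)%N) (t : nat)
    (j : 'I_n) :
  j != idx_min hn t -> `|(idx_min hn t)%:R - t%:R : R| < `|j%:R - t%:R|.
Proof.
rewrite -val_eqE /= => j_neq; have j_lt := ltn_ord j.
have [t_lt | n_le] := ltnP t n.
  have -> : (minn t.+1 n).-1 = t by lia.
  by rewrite subrr normr0 normr_gt0 subr_eq0 eqr_nat; lia.
have -> : (minn t.+1 n).-1 = n.-1 by lia.
have j_lt' : (j%:R : R) < n.-1%:R by rewrite ltr_nat; lia.
have n_le' : (n.-1%:R : R) <= t%:R by rewrite ler_nat; lia.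
by rewrite !ler0_norm; lra.
Qed.

Lemma fatt_query_key (dh db : nat) (p : 'rV[rat]_(dh + db + dh)) (a b x y : rat) :
  fatt (row_mx p (row_mx (a%:M : 'rV_1) b%:M)) (blk5 0 0 0 x y) = - `|a * x + b * y|.
Proof. by rewrite /fatt /blk5 !row_mx0 !dotv_row_mx dotvr0 !dotv_scalar add0r. Qed.

Theorem lemma3 (dh db n : nat) (hdh : (1 <= dh)%N) (hdb : (1 <= db)%N)
  (hn : (1 <= n)%N) (s : 'I_n -> 'rV[rat]_db) (t : nat)
  (p : 'rV[rat]_(dh + db + dh)) :
  let K := fun i : 'I_n => blk5 0 (0 : 'rV[rat]_db) (0 : 'rV[rat]_dh) (-1) (i.+1)%:R in
  let V := fun i : 'I_n => blk5 0 (s i) (0 : 'rV[rat]_dh) 0 0 in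
  let q := row_mx p (row_mx ((t.+1)%:R%:M : 'rV[rat]_1) (1%:M : 'rV[rat]_1))
    : 'rV[rat]_(dh + db + dh + 2) in
  Att q K V = blk5 0 (s (idx_min hn t)) (0 : 'rV[rat]_dh) 0 0.
Proof.
move=> K V q.
have scoreE (j : 'I_n) : fatt q (K j) = - `|j%:R - t%:R|.
  by rewrite fatt_query_key -!natr1; congr (- `|_|); lra.
apply: Att_unique_max => j j_neq.
by rewrite !scoreE ltrN2; apply: idx_min_nearest.
Qed.
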